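(* Let $k$ be a field of characteristic zero and let $X=Q_1\cap\dots\cap Q_c\subset\mathbb{P}^N$ be a smooth complete intersection of $c$ quadrics over $k$. If $X$ contains a $(c-1)$-dimensional linear subspace defined over $k$, then $X$ is rational over $k$.
   Context: Rational over $k$ means birational over $k$ to a projective space. *)

From HB Require Import structures.
From mathcomp Require Import all_boot all_order all_algebra.
From mathcomp Require Import mpoly.
Set Implicit Arguments. Unset Strict Implicit. Unset Printing Implicit Defensive.
Import Order.TTheory GRing.Theory Num.Theory.
Local Open Scope ring_scope.

(* Classical projective geometry over a field k, with geometric points taken
   in an arbitrary algebraically closed field K equipped with a ring morphism
   k -> K (every condition below is first-order, hence independent of the
   chosen algebraically closed extension). *)

Definition homogeneous (n : nat) (R : ringType) (d : nat) (p : {mpoly R[n]}) :=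
  all (fun m => mdeg m == d) (msupp p).

Definition evalK (k : fieldType) (K : closedFieldType) (f : {rmorphism k -> K})
  (n : nat) (p : {mpoly k[n]}) (x : 'I_n -> K) : K :=
  (map_mpoly f p).@[x].

Definition onX (k : fieldType) (K : closedFieldType) (f : {rmorphism k -> K})
  (N c : nat) (Q : 'I_c -> {mpoly k[N.+1]}) (x : 'I_N.+1 -> K) : Prop :=
  x <> (fun _ => 0) /\ forall i, evalK f (Q i) x = 0.

(* X = Q_1 ∩ ... ∩ Q_c is a smooth complete intersection of c quadrics:
   the Q_i are quadratic forms and the Jacobian matrix (dQ_i/dx_j) has
   rank c at every geometric point of X (Jacobian criterion). *)
Definition smooth_ci_quadrics (k : fieldType) (N c : nat)
  (Q : 'I_c -> {mpoly k[N.+1]}) : Prop :=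
  (forall i, homogeneous 2 (Q i)) /\
  forall (K : closedFieldType) (f : {rmorphism k -> K}) (x : 'I_N.+1 -> K),
    onX f Q x ->
    \rank (\matrix_(i < c, j < N.+1) evalK f (mderiv j (Q i)) x) = c.

Definition contains_k_linear_subspace (k : fieldType) (N c d : nat)
  (Q : 'I_c -> {mpoly k[N.+1]}) : Prop :=
  exists V : 'M[k]_(d.+1, N.+1),
    row_free V /\
    forall (a : 'I_d.+1 -> k) (i : 'I_c),
      (Q i).@[fun j => \sum_(l < d.+1) a l * V l j] = 0.

(* X = V(Q) is rational over k, i.e. birational over k to P^n, n = dim X:
   there are rational maps phi : X --> P^n and psi : P^n --> X given by
   homogeneous polynomials with coefficients in k (of common degrees dF, dG),
   defined on nonempty (hence dense, X being irreducible) open subsets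
   U = X ∩ {h <> 0} and W = P^n ∩ {h' <> 0}, such that psi∘phi = id on U
   and phi∘psi = id on W (as maps of projective points). *)
Definition rational_over (k : fieldType) (N c n : nat)
  (Q : 'I_c -> {mpoly k[N.+1]}) : Prop :=
  exists (dF dG : nat) (F : 'I_n.+1 -> {mpoly k[N.+1]})
         (G : 'I_N.+1 -> {mpoly k[n.+1]})
         (h : {mpoly k[N.+1]}) (h' : {mpoly k[n.+1]}),
    (forall i, homogeneous dF (F i)) /\ (forall j, homogeneous dG (G j)) /\
    (exists dh, homogeneous dh h) /\ (exists dh', homogeneous dh' h') /\
    forall (K : closedFieldType) (f : {rmorphism k -> K}),
      let phi x := fun i => evalK f (F i) x in
      let psi y := fun j => evalK f (G j) y in
      (exists x, onX f Q x /\ evalK f h x <> 0) /\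
      (forall x, onX f Q x -> evalK f h x <> 0 ->
         phi x <> (fun _ => 0) /\
         exists2 l : K, l <> 0 & psi (phi x) = (fun j => l * x j)) /\
      (exists y : 'I_n.+1 -> K, y <> (fun _ => 0) /\ evalK f h' y <> 0) /\
      (forall y : 'I_n.+1 -> K, y <> (fun _ => 0) -> evalK f h' y <> 0 ->
         onX f Q (psi y) /\
         exists2 l : K, l <> 0 & phi (psi y) = (fun i => l * y i)).

From HB Require Import structures.
From mathcomp Require Import all_boot all_order all_algebra.
From mathcomp Require Import mpoly.
From mathcomp Require Import fingroup perm ring zify.
From Stdlib Require Import Classical FunctionalExtensionality.
Set Implicit Arguments. Unset Strict Implicit. Unset Printing Implicit Defensive.
Import GRing.Theory.
Local Open Scope ring_scope.

(* Choose coordinates x = (a, y) T with a in k^c, y in k^s (s = N + 1 - c) such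
   that Lambda = {y = 0}. Each Q_i vanishes on Lambda, so its (a, a)-part is
   alternating and Q_i(a, y) = (M(y) a^T)_i + q_i(y), with M(y) a c x c matrix
   linear in y and q_i quadratic. Projection from Lambda, (a, y) |-> y, is
   therefore inverted by y |-> (- (adj M(y) q(y))^T, det M(y) y), and both maps
   are defined over k. They are birational as soon as det M(y) is not
   identically zero, which follows from smoothness of X along Lambda: if every
   M(y) were singular, a rank argument on the linear family M(y) would produce
   nonzero u, a with u M(y) a^T = 0 for all y, i.e. a linear relation u between
   the rows of the Jacobian matrix at the point (a, 0) of Lambda. *)

Definition bform (R : comNzRingType) n m (B : 'M[R]_(n, m)) (x : 'rV_n) (w : 'rV_m) : R :=
  (x *m B *m w^T) 0 0.

Definition qform (R : comNzRingType) n (A : 'M[R]_n) (x : 'rV_n) : R := bform A x x.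

Section BilinearForms.
Variable R : comNzRingType.

Lemma bformE n m (B : 'M[R]_(n, m)) x w :
  bform B x w = \sum_a \sum_b x 0 a * B a b * w 0 b.
Proof.
rewrite /bform mxE exchange_big; apply: eq_bigr => b _.
by rewrite mxE big_distrl /=; apply: eq_bigr => a _; rewrite !mxE.
Qed.

Lemma bform_mul n m p q (B : 'M[R]_(n, m)) (P : 'M_(p, n)) (P' : 'M_(q, m)) x w :
  bform B (x *m P) (w *m P') = bform (P *m B *m P'^T) x w.
Proof. by rewrite /bform trmx_mul !mulmxA. Qed.

Lemma bform_tr n m (B : 'M[R]_(n, m)) x w : bform B^T x w = bform B w x.
Proof.
rewrite /bform; transitivity ((x *m B^T *m w^T)^T 0 0); first by rewrite [RHS]mxE.
by rewrite !trmx_mul !trmxK mulmxA.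
Qed.

Lemma bformDm n m (B C : 'M[R]_(n, m)) x w : bform (B + C) x w = bform B x w + bform C x w.
Proof. by rewrite /bform mulmxDr mulmxDl mxE. Qed.

Lemma bformDl n m (B : 'M[R]_(n, m)) x x' w : bform B (x + x') w = bform B x w + bform B x' w.
Proof. by rewrite /bform !mulmxDl mxE. Qed.

Lemma bformDr n m (B : 'M[R]_(n, m)) x w w' : bform B x (w + w') = bform B x w + bform B x w'.
Proof. by rewrite /bform linearD mulmxDr mxE. Qed.

Lemma bformZl n m (B : 'M[R]_(n, m)) t x w : bform B (t *: x) w = t * bform B x w.
Proof. by rewrite /bform -!scalemxAl mxE. Qed.

Lemma bformZr n m (B : 'M[R]_(n, m)) t x w : bform B x (t *: w) = t * bform B x w.
Proof. by rewrite /bform linearZ /= -!scalemxAr mxE. Qed.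

Lemma bform0l n m (B : 'M[R]_(n, m)) w : bform B 0 w = 0.
Proof. by rewrite /bform !mul0mx mxE. Qed.

Lemma bform0r n m (B : 'M[R]_(n, m)) x : bform B x 0 = 0.
Proof. by rewrite /bform trmx0 mulmx0 mxE. Qed.

Lemma bform0m n m x w : bform (0 : 'M[R]_(n, m)) x w = 0.
Proof. by rewrite /bform mulmx0 mul0mx mxE. Qed.

Lemma bform_row n1 n2 m1 m2 (B : 'M[R]_(n1 + n2, m1 + m2)) a y a' y' :
  bform B (row_mx a y) (row_mx a' y') = bform (ulsubmx B) a a' + bform (ursubmx B) a y'
    + bform (dlsubmx B) y a' + bform (drsubmx B) y y'.
Proof.
rewrite /bform -{1}(submxK B) mul_row_block tr_row_mx mul_row_col !mulmxDl.
rewrite [LHS]mxE [X in X + _ = _]mxE [X in _ + X = _]mxE; ring.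
Qed.

Lemma bform_delta n m (B : 'M[R]_(n, m)) l l' :
  bform B (delta_mx 0 l) (delta_mx 0 l') = B l l'.
Proof. by rewrite /bform -rowE trmx_delta -colE !mxE. Qed.

Lemma bform_deltar n m (B : 'M[R]_(n, m)) x j :
  bform B x (delta_mx 0 j) = \sum_a x 0 a * B a j.
Proof. by rewrite /bform trmx_delta -mulmxA -colE mxE; apply: eq_bigr => a _; rewrite mxE. Qed.

Lemma qformD n (B : 'M[R]_n) x y :
  qform B (x + y) = qform B x + qform B y + (bform B x y + bform B y x).
Proof. rewrite /qform bformDl !bformDr; ring. Qed.

Lemma qformZ n (B : 'M[R]_n) t x : qform B (t *: x) = t ^+ 2 * qform B x.
Proof. rewrite /qform bformZl bformZr; ring. Qed.

Lemma alt_diag n (B : 'M[R]_n) : (forall b, qform B b = 0) -> forall l, B l l = 0.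
Proof. by move=> hB l; rewrite -bform_delta; apply: hB. Qed.

Lemma alt_skew n (B : 'M[R]_n) : (forall b, qform B b = 0) -> B + B^T = 0.
Proof.
move=> hB; apply/matrixP => l l'; rewrite -bform_delta bformDm bform_tr mxE.
by move: (qformD B (delta_mx 0 l) (delta_mx 0 l')); rewrite !hB !add0r => <-.
Qed.

End BilinearForms.

(* Being alternating survives any ring morphism: B = U - U^T for its strictly
   upper triangular part U, and the quadratic form of U - U^T is identically 0. *)
Lemma alt_map (R S : comNzRingType) (f : {rmorphism R -> S}) n (B : 'M[R]_n) :
  (forall b, qform B b = 0) -> forall a, qform (map_mx f B) a = 0.
Proof.
move=> hB a; pose U := \matrix_(l, l') if (l < l')%N then B l l' else 0.
have eB : B = U - U^T.
  apply/matrixP => l l'; rewrite !mxE.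
  case: (ltngtP l l') => [_|_|/val_inj <-]; first by rewrite subr0.
    by move/matrixP/(_ l l'): (alt_skew hB); rewrite !mxE sub0r => /eqP; rewrite addr_eq0 => /eqP.
  by rewrite alt_diag // subrr.
rewrite eB raddfB /= -map_trmx /qform bformDm.
by rewrite {2}/bform mulmxN mulNmx mxE -/(bform _ a a) bform_tr subrr.
Qed.


Definition qpoly (R : comNzRingType) n (A : 'M[R]_n) : {mpoly R[n]} :=
  \sum_a \sum_b A a b *: ('X_a * 'X_b).

Section QuadricPolynomials.
Variable R : comNzRingType.

Lemma qpolyD n (A B : 'M[R]_n) : qpoly (A + B) = qpoly A + qpoly B.
Proof.
rewrite /qpoly -big_split /=; apply: eq_bigr => a _.
by rewrite -big_split /=; apply: eq_bigr => b _; rewrite mxE scalerDl.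
Qed.

Lemma qpoly0 n : qpoly (0 : 'M[R]_n) = 0.
Proof. by rewrite /qpoly big1 // => a _; rewrite big1 // => b _; rewrite mxE scale0r. Qed.

Lemma qpoly_delta n (t : R) (a b : 'I_n) : qpoly (t *: delta_mx a b) = t *: ('X_a * 'X_b).
Proof.
rewrite /qpoly (bigD1 a) //= [X in _ + X]big1 => [|a' ne]; last first.
  by rewrite big1 // => b' _; rewrite !mxE (negbTE ne) mulr0 scale0r.
rewrite addr0 (bigD1 b) //= [X in _ + X]big1 => [|b' ne]; last first.
  by rewrite !mxE (negbTE ne) andbF mulr0 scale0r.
by rewrite addr0 !mxE !eqxx mulr1.
Qed.

Lemma mdeg2_split n (m : 'X_{1..n}) : mdeg m = 2%N -> exists a b, m = (U_(a) + U_(b))%MM.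
Proof.
move=> hm.
have [i hi] : exists i, (0 < m i)%N.
  apply/existsP; apply: contraT; rewrite negb_exists => /forallP h.
  suff m0 : m = 0%MM by move: hm; rewrite m0 mdeg0.
  by apply/mnmP => i; rewrite mnm0E; move: (h i); rewrite lt0n negbK => /eqP.
have le : (U_(i) <= m)%MM by apply/mnm_lepP => j; rewrite mnm1E; case: eqP => [<-|].
have e := submK le.
have /eqP/mdeg1P [j /eqP hj] : mdeg (m - U_(i))%MM = 1%N.
  by move: hm; rewrite -{1}e mdegD mdeg1 addn1 => -[].
by exists j, i; rewrite -hj e.
Qed.

Lemma homog2_qpoly n (p : {mpoly R[n]}) : homogeneous 2 p -> exists A, p = qpoly A.
Proof.
rewrite /homogeneous => hom; rewrite (mpolyE p); elim: (msupp p) hom => [|m s IH] /=.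
  by move=> _; exists 0; rewrite big_nil qpoly0.
case/andP => /eqP /mdeg2_split [a [b em]] /IH [A eA]; rewrite big_cons eA em.
by exists (A + p@_(U_(a) + U_(b))%MM *: delta_mx a b); rewrite qpolyD qpoly_delta mpolyXD addrC.
Qed.

Lemma meval_qpoly n (A : 'M[R]_n) (v : 'I_n -> R) : (qpoly A).@[v] = qform A (\row_j v j).
Proof.
rewrite /qform bformE /qpoly raddf_sum; apply: eq_bigr => a _.
rewrite raddf_sum; apply: eq_bigr => b _.
by rewrite /= mevalZ mevalM !mevalXU !mxE mulrCA mulrA.
Qed.

Lemma map_qpoly (S : comNzRingType) (g : {rmorphism R -> S}) n (A : 'M[R]_n) :
  map_mpoly g (qpoly A) = qpoly (map_mx g A).
Proof.
rewrite /qpoly raddf_sum; apply: eq_bigr => a _; rewrite raddf_sum; apply: eq_bigr => b _.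
by rewrite /= map_mpolyZ rmorphM /= !map_mpolyX mxE.
Qed.

Lemma mderivXU n (a j : 'I_n) : mderiv j ('X_a : {mpoly R[n]}) = (a == j)%:R.
Proof.
rewrite mderivX mnm1E; case: eqP => [->|]; last by rewrite scale0r.
have -> : (U_(j) - U_(j) = 0 :> 'X_{1..n})%MM by apply/mnmP => i; rewrite !mnmE subnn.
by rewrite mpolyX0 scale1r.
Qed.

Lemma mderiv_qpoly n (A : 'M[R]_n) j :
  mderiv j (qpoly A) = \sum_b (A j b + A b j) *: 'X_b.
Proof.
have dX a b : mderiv j ('X_a * 'X_b : {mpoly R[n]}) =
    (if a == j then 'X_b else 0) + (if b == j then 'X_a else 0).
  by rewrite mderivM !mderivXU; case: eqP; case: eqP; rewrite ?mul1r ?mulr1 ?mul0r ?mulr0.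
rewrite /qpoly raddf_sum /=.
transitivity (\sum_a \sum_b A a b *: ((if a == j then 'X_b else 0) + (if b == j then 'X_a else 0))).
  by apply: eq_bigr => a _; rewrite raddf_sum; apply: eq_bigr => b _; rewrite /= mderivZ dX.
rewrite (eq_bigr (fun a => \sum_b A a b *: (if a == j then 'X_b else 0) + A a j *: 'X_a)); last first.
  move=> a _; rewrite (eq_bigr _ (fun b _ => scalerDr _ _ _)) big_split /=; congr (_ + _).
  rewrite (bigD1 j) //= eqxx big1 ?addr0 // => b /negbTE ->.
  by rewrite scaler0.
rewrite big_split /= exchange_big -big_split /=; apply: eq_bigr => b _.
rewrite (bigD1 j) //= eqxx big1 ?addr0 ?scalerDl // => a /negbTE ->.
by rewrite scaler0.
Qed.

End QuadricPolynomials.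

Lemma evalK_qpoly (k : fieldType) (K : closedFieldType) (f : {rmorphism k -> K}) n
    (A : 'M[k]_n) x :
  evalK f (qpoly A) x = qform (map_mx f A) (\row_j x j).
Proof. by rewrite /evalK map_qpoly meval_qpoly. Qed.

Section Homogeneity.
Variables (R : comNzRingType) (p : nat).

Lemma homogeneousE d (q : {mpoly R[p]}) : homogeneous d q = (q \is d.-homog).
Proof. by rewrite dhomogE. Qed.

Lemma dhomog_var (i : 'I_p) : ('X_i : {mpoly R[p]}) \is 1.-homog.
Proof. by rewrite dhomogX; apply/eqP; apply: mdeg1. Qed.

Lemma dhomog_linear (b : 'I_p -> R) : \sum_j b j *: 'X_j \is [in R[p], 1.-homog].
Proof. by apply: rpred_sum => j _; apply/rpredZ/dhomog_var. Qed.

Lemma dhomog_qpoly (B : 'M[R]_p) : qpoly B \is 2.-homog.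
Proof.
apply: rpred_sum => a _; apply: rpred_sum => b _; apply: rpredZ.
exact: (@dhomogM _ _ _ 1 _ 1 _ (dhomog_var a) (dhomog_var b)).
Qed.

Lemma dhomog_prod n d (F : 'I_n -> {mpoly R[p]}) :
  (forall i, F i \is d.-homog) -> \prod_i F i \is (d * n).-homog.
Proof.
elim: n F => [|n IH] F h; first by rewrite big_ord0 muln0 dhomog1.
rewrite big_ord_recr /= mulnS addnC; apply: dhomogM => //; exact: IH.
Qed.

Lemma dhomog_det n d (M : 'M[{mpoly R[p]}]_n) :
  (forall i j, M i j \is d.-homog) -> \det M \is (d * n).-homog.
Proof.
move=> h; apply: rpred_sum => sg _.
have hp : \prod_i M i (sg i) \is (d * n).-homog by apply: dhomog_prod.
by case: (odd_perm sg) => /=; rewrite ?expr0 ?expr1 ?mul1r ?mulN1r ?rpredN.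
Qed.

Lemma dhomog_adj n d (M : 'M[{mpoly R[p]}]_n.+1) :
  (forall i j, M i j \is d.-homog) -> forall i j, \adj M i j \is (d * n).-homog.
Proof.
move=> h i j; rewrite mxE /cofactor.
have hd : \det (row' j (col' i M)) \is (d * n).-homog by apply: dhomog_det => a b; rewrite !mxE.
by rewrite -signr_odd; case: (odd _) => /=; rewrite ?expr0 ?expr1 ?mul1r ?mulN1r ?rpredN.
Qed.

End Homogeneity.

Section ClosedFieldLinearAlgebra.
Variable K : closedFieldType.

(* Over an algebraically closed (hence infinite) field, a polynomial vanishing
   at every nonzero point is zero: otherwise X * p - 1 would have no root. *)
Lemma poly_vanish_nz (p : {poly K}) : (forall t, t != 0 -> p.[t] = 0) -> p = 0.
Proof.
move=> h; apply/eqP; apply: contraT => pnz.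
have szq : (1 < size ('X * p)%R)%N.
  by rewrite size_mul ?polyX_eq0 // size_polyX; move: pnz; rewrite -size_poly_gt0; case: (size p).
have : size ('X * p - 1) != 1%N.
  by rewrite size_polyDl ?size_polyN ?size_poly1 //; move: szq; case: (size _) => [|[|]].
case/closed_rootP => z; rewrite /root !hornerE.
have -> : z * p.[z] = 0 by have [->|/h ->] := eqVneq z 0; rewrite ?mul0r ?mulr0.
by rewrite sub0r oppr_eq0 oner_eq0.
Qed.

(* If det (E0 + t E1) vanishes for all t != 0, it vanishes at t = 0 too,
   being a polynomial in t. *)
Lemma det_pencil_at0 n (E0 E1 : 'M[K]_n) :
  (forall t, t != 0 -> \det (E0 + t *: E1) = 0) -> \det E0 = 0.
Proof.
move=> h; pose P := \det (map_mx polyC E0 + 'X *: map_mx polyC E1).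
have eP t : P.[t] = \det (E0 + t *: E1).
  rewrite -horner_evalE -det_map_mx; congr (\det _).
  by apply/matrixP => i j; rewrite !mxE /= horner_evalE !hornerE.
have P0 : P = 0 by apply: poly_vanish_nz => t /h; rewrite eP.
by have := eP 0; rewrite P0 horner0 scale0r addr0.
Qed.

Lemma row_pid_ge m n r (i : 'I_m) : (r <= i)%N -> row i (pid_mx r : 'M[K]_(m, n)) = 0.
Proof. by move=> h; apply/matrixP => a b; rewrite !mxE; case: eqP => //= _; rewrite ltnNge h. Qed.

Lemma col_pid_ge m n r (i : 'I_n) : (r <= i)%N -> col i (pid_mx r : 'M[K]_(m, n)) = 0.
Proof. by move=> h; apply/matrixP => a b; rewrite !mxE; case: eqP => //= ->; rewrite ltnNge h. Qed.

(* The (r+1)-minor on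
   the indices 0..r of pid_mx r + t C vanishes; up to the factor t it is
   det (E0 + t E1) whose value at t = 0 is C_rr. *)
Lemma pid_rank_perturb c r (hr : (r < c)%N) (C : 'M[K]_c) :
  (forall t, (\rank (pid_mx r + t *: C)%R <= r)%N) -> C (Ordinal hr) (Ordinal hr) = 0.
Proof.
set ir := Ordinal hr => hC.
pose S1 : 'M[K]_(1 + r, c) := col_mx (delta_mx 0 ir) (pid_mx r).
pose S2 : 'M[K]_(c, 1 + r) := row_mx (delta_mx ir 0) (pid_mx r).
pose k11 := delta_mx (0 : 'I_1) ir *m C *m delta_mx ir (0 : 'I_1).
pose k12 := delta_mx (0 : 'I_1) ir *m C *m (pid_mx r : 'M_(c, r)).
pose k21 := (pid_mx r : 'M_(r, c)) *m C *m delta_mx ir (0 : 'I_1).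
pose k22 := (pid_mx r : 'M_(r, c)) *m C *m (pid_mx r : 'M_(c, r)).
have eSP : S1 *m pid_mx r *m S2 = block_mx 0 0 0 1%:M.
  rewrite /S1 /S2 mul_col_mx mul_col_row -rowE row_pid_ge // !mul0mx !mul_pid_mx !minnn.
  by rewrite (minn_idPr (ltnW hr)) minnn -colE col_pid_ge // (minn_idPr (ltnW hr)) pid_mx_1.
have eSC : S1 *m C *m S2 = block_mx k11 k12 k21 k22 by rewrite mul_col_mx mul_col_row.
have minor0 t : \det (S1 *m (pid_mx r + t *: C) *m S2) = 0.
  apply/eqP; apply: contraT => /negPf nz.
  have /mxrank_unit rk : S1 *m (pid_mx r + t *: C) *m S2 \in unitmx by rewrite unitmxE unitfE nz.
  have := leq_trans (mxrankM_maxl _ S2) (leq_trans (mxrankM_maxr S1 _) (hC t)).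
  by rewrite rk add1n ltnn.
suff : \det (block_mx k11 0 k21 (1%:M : 'M_r)) = 0.
  by rewrite det_lblock det1 mulr1 det_mx11 -(bform_delta C) /bform trmx_delta.
apply: det_pencil_at0 (block_mx 0 k12 0 k22) _ => t tnz.
have eM : S1 *m (pid_mx r + t *: C) *m S2 =
    block_mx k11 (t *: k12) k21 (1%:M + t *: k22) *m block_mx t%:M 0 0 1%:M.
  rewrite mulmxDr mulmxDl eSP -scalemxAr -scalemxAl eSC scale_block_mx add_block_mx mulmx_block.
  by rewrite !mulmx0 !mulmx1 !mul_mx_scalar !addr0 !add0r.
have := minor0 t; rewrite eM det_mulmx det_ublock det_scalar det1 expr1 mulr1 => /eqP.
rewrite mulf_eq0 (negPf tnz) orbF scale_block_mx add_block_mx !scaler0 !addr0 add0r.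
by move/eqP.
Qed.

(* Reduce B to pid_mx (rank B) by invertible changes of basis. *)
Lemma rank_perturb_core c (B : 'M[K]_c) : (\rank B < c)%N ->
  exists u a : 'rV[K]_c, [/\ u != 0, a != 0 &
    forall C, (forall t, (\rank (B + t *: C)%R <= \rank B)%N) -> bform C u a = 0].
Proof.
set r := \rank B => hr; pose ir := Ordinal hr.
pose L := col_ebase B; pose P := row_ebase B.
have uL : L \in unitmx by apply: col_ebase_unit.
have uP : P \in unitmx by apply: row_ebase_unit.
have eB : B = L *m pid_mx r *m P by rewrite mulmx_ebase.
have delta_nz (M : 'M[K]_c) : M \in unitmx -> delta_mx (0 : 'I_1) ir *m M != 0.
  move=> uM; apply/eqP => /(congr1 (mulmx^~ (invmx M))); rewrite mulmxK // mul0mx.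
  by move/matrixP/(_ 0 ir); rewrite !mxE !eqxx => /eqP; rewrite oner_eq0.
exists (delta_mx 0 ir *m invmx L), (delta_mx 0 ir *m (invmx P)^T).
split; [by apply/delta_nz; rewrite unitmx_inv | by apply/delta_nz; rewrite unitmx_tr unitmx_inv |].
move=> C hC; rewrite bform_mul trmxK bform_delta.
apply: pid_rank_perturb => t; apply: leq_trans (hC t).
have -> : pid_mx r + t *: (invmx L *m C *m invmx P) = invmx L *m (B + t *: C) *m invmx P.
  rewrite mulmxDr mulmxDl eB !mulmxA mulVmx // mul1mx -(mulmxA (pid_mx r)) mulmxV // mulmx1.
  by rewrite -scalemxAr -scalemxAl.
by apply: leq_trans (mxrankM_maxl _ _) _; apply: mxrankM_maxr.
Qed.

(* A linear family of square matrices y |-> M y contains a nonsingular member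
   as soon as no pair of nonzero vectors u, a is orthogonal for all M y:
   starting from a member of maximal rank, the core estimate above would
   otherwise produce such a pair. *)
Lemma pencil_nonsingular c s (M : 'rV[K]_s -> 'M[K]_c) :
  (forall y y' t, M (y + t *: y') = M y + t *: M y') ->
  (forall u a : 'rV_c, u != 0 -> a != 0 -> exists y, bform (M y) u a != 0) ->
  exists y, \det (M y) != 0.
Proof.
move=> lin H.
suff: forall d y, (c - \rank (M y) <= d)%N -> exists y', \det (M y') != 0.
  by move/(_ c 0); apply; rewrite leq_subr.
elim=> [|d IH] y hd.
  exists y; rewrite -unitfE -unitmxE -row_free_unit /row_free eqn_leq rank_leq_row /=.
  by rewrite -subn_eq0 -leqn0.
have [/eqP e|ne] := eqVneq (\rank (M y)) c.
  by exists y; rewrite -unitfE -unitmxE -row_free_unit /row_free e.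
have lt : (\rank (M y) < c)%N by rewrite ltn_neqAle ne rank_leq_row.
case: (classic (exists y', (\rank (M y) < \rank (M y'))%N)) => [[y' hy']|nex].
  by apply: (IH y'); move: hd hy'; lia.
have [u [a [unz anz hcore]]] := rank_perturb_core lt.
have [y' /negP[]] := H u a unz anz.
apply/eqP; apply: hcore => t; rewrite -lin leqNgt; apply/negP => hlt.
by apply: nex; exists (y + t *: y').
Qed.

End ClosedFieldLinearAlgebra.

Lemma adapted_basis (F : fieldType) c s p (e : p = (c + s)%N) (V : 'M[F]_(c, p)) :
  row_free V ->
  exists (L : 'M[F]_c) (T : 'M[F]_(c + s, p)) (Tinv : 'M[F]_(p, c + s)),
    [/\ L \in unitmx, T *m Tinv = 1%:M, Tinv *m T = 1%:M & V = L *m usubmx T].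
Proof.
subst p => rf; have uT := row_ebase_unit V.
exists (col_ebase V), (row_ebase V), (invmx (row_ebase V)).
split; [exact: col_ebase_unit | by rewrite mulmxV | by rewrite mulVmx |].
rewrite -{1}(mulmx_ebase V) (eqP rf) -mulmxA; congr (_ *m _).
by rewrite pid_mx_row -{1}(vsubmxK (row_ebase V)) mul_row_col mul1mx mul0mx addr0.
Qed.

Lemma row_fun (R : Type) n (x : 'rV[R]_n) : \row_j x 0 j = x.
Proof. by apply/matrixP => i j; rewrite mxE ord1. Qed.

Lemma row_neq0 (R : zmodType) n (y : 'I_n -> R) : y <> (fun _ => 0) <-> \row_m y m != 0.
Proof.
split=> [h|/eqP h e]; last by apply: h; apply/matrixP => i m; rewrite !mxE e.
apply/eqP => e; apply: h; apply: functional_extensionality => m.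
by move/matrixP/(_ 0 m): e; rewrite !mxE.
Qed.

(* Let Lambda = P(row space of usubmx T) be contained in
   X = V(Q_1..Q_c), Q_i = qpoly (A i), and write x = (a, y) T with
   a in K^c, y in K^s. *)
Section ProjectionFromLinearSubspace.
Variables (k : fieldType) (c' s N : nat).
Local Notation c := c'.+1.
Variables (A : 'I_c -> 'M[k]_N.+1) (T : 'M[k]_(c + s, N.+1)) (Tinv : 'M[k]_(N.+1, c + s)).
Hypotheses (T_Tinv : T *m Tinv = 1%:M) (Tinv_T : Tinv *m T = 1%:M).
Hypothesis Lambda_in_X : forall i (b : 'rV[k]_c), qform (A i) (b *m usubmx T) = 0.

Local Notation X := (fun i => qpoly (A i)).

(* The matrix of Q_i in the coordinates z = (a, y), where x = z T. *)
Definition Acoord i := T *m A i *m T^T.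
(* The mixed (a, y) part and the pure y part of Q_i. *)
Definition Bmix i : 'M[k]_(c, s) := ursubmx (Acoord i) + (dlsubmx (Acoord i))^T.
Definition Ay i := drsubmx (Acoord i).

(* Since Lambda lies on X, the pure a part of Q_i is alternating. *)
Lemma Aa_alt i b : qform (ulsubmx (Acoord i)) b = 0.
Proof.
move: (Lambda_in_X i b).
have -> : b *m usubmx T = row_mx b 0 *m T by rewrite -{2}(vsubmxK T) mul_row_col mul0mx addr0.
by rewrite /qform bform_mul -/(Acoord i) bform_row !bform0l !bform0r !addr0.
Qed.

Definition pencil_poly p (L : 'I_s -> {mpoly k[p]}) : 'M[{mpoly k[p]}]_c :=
  \matrix_(i, l) \sum_m Bmix i l m *: L m.
Definition proj_poly (m : 'I_s) : {mpoly k[N.+1]} := \sum_j Tinv j (rshift c m) *: 'X_j.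
Definition Mvar := pencil_poly (fun m : 'I_s => 'X_m).
Definition Dvar := \det Mvar.
Definition Dproj := \det (pencil_poly proj_poly).
Definition qvec_poly : 'cV[{mpoly k[s]}]_c := \col_i qpoly (Ay i).
Definition lift_poly : 'rV[{mpoly k[s]}]_(c + s) :=
  row_mx (- (\adj Mvar *m qvec_poly)^T) (Dvar *: \row_m 'X_m).
Definition inv_poly (j : 'I_N.+1) : {mpoly k[s]} := \sum_q lift_poly 0 q * (T q j)%:MP.

Lemma pencil_poly_homog p (L : 'I_s -> {mpoly k[p]}) :
  (forall m, L m \is 1.-homog) -> forall i l, pencil_poly L i l \is 1.-homog.
Proof. by move=> h i l; rewrite mxE; apply: rpred_sum => m _; apply: rpredZ. Qed.

Lemma proj_poly_homog m : homogeneous 1 (proj_poly m).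
Proof. by rewrite homogeneousE; apply: dhomog_linear. Qed.

Lemma Mvar_homog i l : Mvar i l \is 1.-homog.
Proof. by apply: pencil_poly_homog => m; apply: dhomog_var. Qed.

Lemma Dvar_homog : homogeneous c Dvar.
Proof. by rewrite homogeneousE -(mul1n c); apply: dhomog_det; apply: Mvar_homog. Qed.

Lemma Dproj_homog : homogeneous c Dproj.
Proof.
rewrite homogeneousE -(mul1n c); apply/dhomog_det/pencil_poly_homog => m.
by rewrite -homogeneousE; apply: proj_poly_homog.
Qed.

Lemma lift_poly_homog q : lift_poly 0 q \is c.+1.-homog.
Proof.
rewrite mxE; case: splitP => l _; rewrite !mxE.
  rewrite rpredN; apply: rpred_sum => i _; rewrite -addn2.
  have := dhomog_adj Mvar_homog l i; rewrite mul1n => hadj.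
  by apply: dhomogM hadj _; rewrite mxE dhomog_qpoly.
rewrite -addn1; apply: dhomogM (dhomog_var _ l).
by rewrite -homogeneousE Dvar_homog.
Qed.

Lemma inv_poly_homog j : homogeneous c.+1 (inv_poly j).
Proof.
rewrite homogeneousE; apply: rpred_sum => q _.
by rewrite mulrC mul_mpolyC rpredZ // lift_poly_homog.
Qed.

Section OverClosedField.
Variables (K : closedFieldType) (f : {rmorphism k -> K}).

Definition pen (y : 'rV[K]_s) : 'M[K]_c := \matrix_(i, l) \sum_m f (Bmix i l m) * y 0 m.
Definition qvec (y : 'rV[K]_s) : 'cV[K]_c := \col_i qform (map_mx f (Ay i)) y.
Definition to_coord (x : 'I_N.+1 -> K) : 'rV_(c + s) := (\row_j x j) *m map_mx f Tinv.
Definition of_coord (z : 'rV[K]_(c + s)) : 'I_N.+1 -> K := fun j => (z *m map_mx f T) 0 j.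
Definition lift (y : 'rV[K]_s) : 'rV[K]_(c + s) :=
  row_mx (- (\adj (pen y) *m qvec y)^T) (\det (pen y) *: y).

Definition ev p (v : 'I_p -> K) : {rmorphism {mpoly k[p]} -> K} := meval v \o map_mpoly f.

Lemma evalK_ev p (q : {mpoly k[p]}) v : evalK f q v = ev v q.
Proof. by []. Qed.

Lemma ev_var p (v : 'I_p -> K) i : ev v 'X_i = v i.
Proof. by rewrite /= map_mpolyX mevalXU. Qed.

Lemma ev_lin p (v : 'I_p -> K) I (r : seq I) (P : pred I) (b : I -> k) (L : I -> {mpoly k[p]}) :
  ev v (\sum_(m <- r | P m) b m *: L m) = \sum_(m <- r | P m) f (b m) * ev v (L m).
Proof. by rewrite rmorph_sum; apply: eq_bigr => m _; rewrite /= map_mpolyZ mevalZ. Qed.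

Lemma of_coordK z : to_coord (of_coord z) = z.
Proof. by rewrite /to_coord /of_coord row_fun -mulmxA -map_mxM T_Tinv map_mx1 mulmx1. Qed.

Lemma to_coordK x : of_coord (to_coord x) = x.
Proof.
apply: functional_extensionality => j.
by rewrite /to_coord /of_coord -mulmxA -map_mxM Tinv_T map_mx1 mulmx1 mxE.
Qed.

Lemma to_coord0 : to_coord (fun _ => 0) = 0.
Proof. by apply/matrixP => i j; rewrite !mxE big1 // => q _; rewrite mxE mul0r. Qed.

Lemma of_coordZ t z : of_coord (t *: z) = fun j => t * of_coord z j.
Proof. by apply: functional_extensionality => j; rewrite /of_coord -scalemxAl mxE. Qed.

Lemma pen_lin y y' t : pen (y + t *: y') = pen y + t *: pen y'.
Proof.
apply/matrixP => i l; rewrite !mxE big_distrr -big_split /=; apply: eq_bigr => m _.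
by rewrite !mxE; ring.
Qed.

Lemma pen0 : pen 0 = 0.
Proof. by apply/matrixP => i l; rewrite !mxE big1 // => m _; rewrite !mxE mulr0. Qed.

Lemma penZ t y : pen (t *: y) = t *: pen y.
Proof. by rewrite -(add0r (t *: y)) pen_lin pen0 add0r. Qed.

Lemma qvecZ t y : qvec (t *: y) = t ^+ 2 *: qvec y.
Proof. by apply/matrixP => i l; rewrite !mxE qformZ. Qed.

Lemma qvec0 : qvec 0 = 0.
Proof. by rewrite -(scale0r 0) qvecZ expr0n scale0r. Qed.

Lemma bform_Bmix i (a : 'rV[K]_c) y : bform (map_mx f (Bmix i)) a y = (pen y *m a^T) i 0.
Proof.
rewrite bformE mxE; apply: eq_bigr => l _; rewrite !mxE big_distrl /=; apply: eq_bigr => m _.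
by rewrite !mxE; ring.
Qed.

Lemma eval_coord a y : \col_i evalK f (X i) (of_coord (row_mx a y)) = pen y *m a^T + qvec y.
Proof.
apply/matrixP => i l; rewrite ord1 !mxE evalK_qpoly /of_coord row_fun /qform bform_mul.
rewrite map_trmx -!map_mxM -/(Acoord i) bform_row -map_ulsubmx.
rewrite -[bform _ a a]/(qform _ a) (alt_map f (Aa_alt i)) add0r -map_ursubmx -map_dlsubmx.
rewrite -(bform_tr (map_mx f (dlsubmx (Acoord i)))) -bformDm map_trmx -raddfD /= -/(Bmix i).
by rewrite bform_Bmix -map_drsubmx !mxE.
Qed.

Lemma onX_coord x : onX f X x -> pen (rsubmx (to_coord x)) *m (lsubmx (to_coord x))^T
  + qvec (rsubmx (to_coord x)) = 0.
Proof. by case=> _ h; rewrite -eval_coord hsubmxK to_coordK; apply/matrixP => i l; rewrite !mxE h. Qed.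

Lemma lift_proj x : onX f X x ->
  lift (rsubmx (to_coord x)) = \det (pen (rsubmx (to_coord x))) *: to_coord x.
Proof.
move=> /onX_coord h; rewrite /lift.
have -> : qvec (rsubmx (to_coord x)) = - (pen (rsubmx (to_coord x)) *m (lsubmx (to_coord x))^T).
  by apply/eqP; rewrite -addr_eq0 addrC h.
rewrite mulmxN linearN /= opprK mulmxA mul_adj_mx mul_scalar_mx linearZ /= trmxK.
by rewrite -scale_row_mx hsubmxK.
Qed.

Lemma lift_on_X y : \det (pen y) != 0 -> y != 0 -> onX f X (of_coord (lift y)).
Proof.
move=> Dnz ynz; split.
  move=> /(congr1 to_coord); rewrite of_coordK to_coord0 => /(congr1 rsubmx).
  rewrite row_mxKr linear0 => /eqP; rewrite scaler_eq0 (negPf Dnz) (negPf ynz).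
  by [].
have e0 : pen (\det (pen y) *: y) *m (- (\adj (pen y) *m qvec y)^T)^T + qvec (\det (pen y) *: y) = 0.
  rewrite penZ qvecZ linearN /= trmxK mulmxN -scalemxAl mulmxA.
  by rewrite mul_mx_adj mul_scalar_mx scalerA -expr2 addNr.
move=> i; have /matrixP/(_ i 0) := eval_coord (- (\adj (pen y) *m qvec y)^T) (\det (pen y) *: y).
by rewrite e0 !mxE.
Qed.

Lemma pencil_poly_ev p (v : 'I_p -> K) L : map_mx (ev v) (pencil_poly L) = pen (\row_m ev v (L m)).
Proof. by apply/matrixP => i l; rewrite !mxE ev_lin; apply: eq_bigr => m _; rewrite !mxE. Qed.

Lemma Mvar_ev (y : 'I_s -> K) : map_mx (ev y) Mvar = pen (\row_m y m).
Proof. by rewrite pencil_poly_ev; congr pen; apply/matrixP => i m; rewrite !mxE ev_var. Qed.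

Lemma proj_ev x m : ev x (proj_poly m) = rsubmx (to_coord x) 0 m.
Proof. by rewrite ev_lin !mxE; apply: eq_bigr => j _; rewrite ev_var !mxE mulrC. Qed.

Lemma proj_eval x : (fun m => evalK f (proj_poly m) x) = fun m => rsubmx (to_coord x) 0 m.
Proof. by apply: functional_extensionality => m; rewrite evalK_ev proj_ev. Qed.

Lemma Dproj_eval x : evalK f Dproj x = \det (pen (rsubmx (to_coord x))).
Proof.
rewrite evalK_ev /Dproj -det_map_mx pencil_poly_ev; congr (\det (pen _)).
by apply/matrixP => i m; rewrite ord1 mxE proj_ev.
Qed.

Lemma Dvar_eval y : evalK f Dvar y = \det (pen (\row_m y m)).
Proof. by rewrite evalK_ev /Dvar -det_map_mx Mvar_ev. Qed.

Lemma lift_poly_ev y : map_mx (ev y) lift_poly = lift (\row_m y m).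
Proof.
rewrite /lift_poly /lift map_row_mx map_mxN -map_trmx map_mxM map_mx_adj Mvar_ev map_mxZ.
rewrite /Dvar -det_map_mx Mvar_ev; congr (row_mx (- (_ *m _)^T) (_ *: _)).
  by apply/matrixP => i l; rewrite !mxE -evalK_ev evalK_qpoly.
by apply/matrixP => i m; rewrite !mxE ev_var.
Qed.

Lemma inv_eval y : (fun j => evalK f (inv_poly j) y) = of_coord (lift (\row_m y m)).
Proof.
apply: functional_extensionality => j; rewrite evalK_ev /inv_poly /of_coord -lift_poly_ev.
rewrite rmorph_sum mxE; apply: eq_bigr => q _.
by rewrite rmorphM /= map_mpolyC mevalC !mxE.
Qed.

Lemma jacobian_entry i j x : evalK f (mderiv j (X i)) x =
  bform (map_mx f (A i + (A i)^T)) (\row_j x j) (delta_mx 0 j).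
Proof.
rewrite bform_deltar evalK_ev mderiv_qpoly ev_lin; apply: eq_bigr => b _.
by rewrite ev_var !mxE rmorphD /=; ring.
Qed.

Lemma jacobian_coord i a w : bform (map_mx f (Acoord i)) (row_mx a 0) w
    + bform (map_mx f (Acoord i)) w (row_mx a 0) = (pen (rsubmx w) *m a^T) i 0.
Proof.
rewrite -(hsubmxK w) !bform_row !bform0l !bform0r !addr0 row_mxKr.
rewrite -!map_ulsubmx -!map_ursubmx -!map_dlsubmx -bform_Bmix /Bmix !raddfD /= !bformDm.
rewrite -!map_trmx !bform_tr.
set U := map_mx f (ulsubmx (Acoord i)).
have -> : bform U (lsubmx w) a = - bform U a (lsubmx w).
  apply/eqP; rewrite -addr_eq0 -(bform_tr U) -bformDm /U map_trmx -raddfD /= addrC.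
  by rewrite alt_skew ?map_mx0 ?bform0m //; apply: Aa_alt.
ring.
Qed.

(* Smoothness of X along Lambda forces M(y) to be nondegenerate in the sense
   needed by pencil_nonsingular: if u M(y) a^T = 0 for all y, then u is a
   relation between the rows of the Jacobian matrix at the point (a, 0). *)
Hypothesis smooth_K : forall x, onX f X x ->
  \rank (\matrix_(i < c, j < N.+1) evalK f (mderiv j (X i)) x) = c.

Lemma pen_nondegenerate (u a : 'rV[K]_c) : u != 0 -> a != 0 -> exists y, bform (pen y) u a != 0.
Proof.
move=> unz anz; apply: NNPP => /not_ex_all_not nex.
have hy y : bform (pen y) u a = 0 by apply/eqP/negPn/negP/nex.
pose x := of_coord (row_mx a 0).
have ox : onX f X x.
  split.
    move=> /(congr1 to_coord); rewrite of_coordK to_coord0 => /(congr1 lsubmx).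
    by rewrite row_mxKl linear0 => /eqP; rewrite (negPf anz).
  move=> i; have /matrixP/(_ i 0) := eval_coord a 0.
  by rewrite pen0 qvec0 mul0mx addr0 !mxE.
have rf : row_free (\matrix_(i < c, j < N.+1) evalK f (mderiv j (X i)) x).
  by rewrite /row_free smooth_K.
move/negP: unz; apply; apply/eqP; apply: (row_free_inj rf); rewrite mul0mx.
apply/matrixP => z j; rewrite ord1 [RHS]mxE -[RHS](hy (rsubmx (delta_mx 0 j *m map_mx f Tinv))).
rewrite /bform -mulmxA [LHS]mxE [RHS]mxE; apply: eq_bigr => i _; congr (_ * _).
rewrite [LHS]mxE jacobian_entry.
have -> : \row_j0 x j0 = row_mx a 0 *m map_mx f T by rewrite /x /of_coord row_fun.
have ed : delta_mx (0 : 'I_1) j = delta_mx 0 j *m map_mx f Tinv *m map_mx f T.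
  by rewrite -mulmxA -map_mxM Tinv_T map_mx1 mulmx1.
have eS : T *m (A i + (A i)^T) *m T^T = Acoord i + (Acoord i)^T.
  by rewrite mulmxDr mulmxDl /Acoord !trmx_mul trmxK !mulmxA.
rewrite {1}ed bform_mul map_trmx -!map_mxM eS raddfD /= bformDm -map_trmx bform_tr.
by rewrite jacobian_coord.
Qed.

Lemma exists_nonsingular_pen : exists y, \det (pen y) != 0.
Proof. exact: pencil_nonsingular pen_lin pen_nondegenerate. Qed.

Lemma projection_birational :
  let phi x := fun m => evalK f (proj_poly m) x in
  let psi y := fun j => evalK f (inv_poly j) y in
  (exists x, onX f X x /\ evalK f Dproj x <> 0) /\
  (forall x, onX f X x -> evalK f Dproj x <> 0 ->
     phi x <> (fun _ => 0) /\ exists2 l : K, l <> 0 & psi (phi x) = (fun j => l * x j)) /\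
  (exists y : 'I_s -> K, y <> (fun _ => 0) /\ evalK f Dvar y <> 0) /\
  (forall y : 'I_s -> K, y <> (fun _ => 0) -> evalK f Dvar y <> 0 ->
     onX f X (psi y) /\ exists2 l : K, l <> 0 & phi (psi y) = (fun i => l * y i)).
Proof.
move=> phi psi.
have phiE x : phi x = fun m => rsubmx (to_coord x) 0 m := proj_eval x.
have psiE y : psi y = of_coord (lift (\row_m y m)) := inv_eval y.
have [y0 hy0] := exists_nonsingular_pen.
have y0nz : y0 != 0 by apply: contraNneq hy0 => ->; rewrite pen0 det0.
split; [|split; [|split]].
- exists (of_coord (lift y0)); split; first exact: lift_on_X.
  rewrite Dproj_eval of_coordK row_mxKr penZ detZ; apply/eqP.
  by rewrite mulf_neq0 // expf_neq0.
- move=> x ox /eqP; rewrite Dproj_eval => Dnz; split.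
    by rewrite phiE row_neq0 row_fun; apply: contraNneq Dnz => ->; rewrite pen0 det0.
  exists (\det (pen (rsubmx (to_coord x)))); first exact/eqP.
  by rewrite psiE phiE row_fun lift_proj // of_coordZ to_coordK.
- exists (fun m => y0 0 m); split; first by rewrite row_neq0 row_fun.
  by rewrite Dvar_eval row_fun; apply/eqP.
- move=> y /row_neq0 ynz /eqP; rewrite Dvar_eval => Dnz; rewrite psiE.
  split; first exact: lift_on_X.
  exists (\det (pen (\row_m y m))); first exact/eqP.
  by rewrite phiE of_coordK row_mxKr; apply: functional_extensionality => m; rewrite !mxE.
Qed.

End OverClosedField.

End ProjectionFromLinearSubspace.

Lemma rational_in_adapted_coords (k : fieldType) (c' n N : nat) (A : 'I_c'.+1 -> 'M[k]_N.+1)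
    (T : 'M[k]_(c'.+1 + n.+1, N.+1)) (Tinv : 'M[k]_(N.+1, c'.+1 + n.+1)) :
  T *m Tinv = 1%:M -> Tinv *m T = 1%:M ->
  (forall i (b : 'rV[k]_c'.+1), qform (A i) (b *m usubmx T) = 0) ->
  smooth_ci_quadrics (fun i => qpoly (A i)) ->
  rational_over n (fun i => qpoly (A i)).
Proof.
move=> T_Tinv Tinv_T Lambda_in_X [_ smooth].
exists 1%N, c'.+2, (proj_poly Tinv), (inv_poly A T), (Dproj A T Tinv), (Dvar A T).
split; first exact: proj_poly_homog.
split; first exact: inv_poly_homog.
split; first by exists c'.+1; apply: Dproj_homog.
split; first by exists c'.+1; apply: Dvar_homog.
by move=> K f; apply: projection_birational => //; apply: smooth.
Qed.

Lemma rational_no_equations (k : fieldType) N (Q : 'I_0 -> {mpoly k[N.+1]}) : rational_over N Q.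
Proof.
have hX p (i : 'I_p) : homogeneous 1 ('X_i : {mpoly k[p]}) by rewrite homogeneousE dhomog_var.
exists 1%N, 1%N, (fun i => 'X_i), (fun j => 'X_j), 1, 1.
do 2 (split; first by move=> i; apply: hX).
do 2 (split; first by exists 0%N; rewrite homogeneousE dhomog1).
move=> K f /=.
have ev1 (x : 'I_N.+1 -> K) : evalK f 1 x <> 0.
  by rewrite /evalK rmorph1 meval1; apply/eqP; apply: oner_neq0.
have id (x : 'I_N.+1 -> K) : (fun j => evalK f 'X_j x) = x.
  by apply: functional_extensionality => j; rewrite /evalK map_mpolyX mevalXU.
have onXE x : x <> (fun _ => 0) -> onX f Q x by move=> hx; split => // -[].
have one_nz : (fun _ : 'I_N.+1 => 1 : K) <> (fun _ => 0).
  by move/(congr1 (fun g => g ord0))/eqP; rewrite oner_eq0.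
have scale1 (x : 'I_N.+1 -> K) : exists2 l : K, l <> 0 & x = fun j => l * x j.
  by exists 1; [apply/eqP; apply: oner_neq0 | apply: functional_extensionality => j; rewrite mul1r].
split; [|split; [|split]].
- by exists (fun _ => 1); split; [exact: onXE | exact: ev1].
- by move=> x [hx _] _; rewrite !id.
- by exists (fun _ => 1); split; [exact: one_nz | exact: ev1].
- by move=> y hy _; rewrite !id; split; [exact: onXE |].
Qed.

Unset Implicit Arguments.

Theorem lemma4p3 (k : fieldType) (N c : nat) (Q : 'I_c -> {mpoly k[N.+1]}) :
  [pchar k] =i pred0 ->
  (c < N)%N ->
  smooth_ci_quadrics Q ->
  contains_k_linear_subspace (c.-1) Q ->
  rational_over (N - c) Q.
Proof.
move=> _ hcN sm [V [rfV Lambda]].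
case: c Q sm V rfV Lambda hcN => [|c'] Q sm V rfV Lambda hcN.
  by rewrite subn0; apply: rational_no_equations.
have [A eA] : exists A : 'I_c'.+1 -> 'M[k]_N.+1, forall i, Q i = qpoly (A i).
  apply: (@fin_all_exists _ (fun _ => 'M[k]_N.+1) (fun i B => Q i = qpoly B)) => i.
  exact: homog2_qpoly (sm.1 i).
have eQ : Q = (fun i => qpoly (A i)) by apply: functional_extensionality.
rewrite {}eQ in sm Lambda *.
have e : N.+1 = (c'.+1 + (N - c'.+1).+1)%N by rewrite addnS subnKC // ltnW.
have [L [T [Tinv [uL T_Tinv Tinv_T eV]]]] := adapted_basis e rfV.
apply: rational_in_adapted_coords T_Tinv Tinv_T _ sm => i b.
have -> : b *m usubmx T = (b *m invmx L) *m V by rewrite eV mulmxA mulmxKV.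
have := Lambda (fun l => (b *m invmx L) 0 l) i; rewrite meval_qpoly => <-.
by congr qform; apply/matrixP => z j; rewrite ord1 !mxE.
Qed.
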